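(* Let $k\ge 2$ and $n\ge 1$. For any $c\in\mathbb{N}$, there exists a classical $k$-party SMP protocol for the $k$-party equality function on $n$-bit inputs (the function of $x_1,\dots,x_k\in\{0,1\}^n$ that equals $1$ if and only if $x_1=x_2=\dots=x_k$), in which XOR-shared randomness is used and each player sends $c$ bits to the referee, such that: if $x_1=x_2=\dots=x_k$, the referee's answer is always $1$; otherwise, the referee's answer is $0$ with probability $1-1/2^c$.
   Context: The $k$-party SMP model: players $A_1,\dots,A_k$, where $A_i$ receives $x_i$, each send one message to a referee, who computes the output from the messages. XOR-shared randomness: each player $A_i$ receives an arbitrarily long random string $r_i$ (independent of the input) such that every $k-1$ of the strings $r_1,\dots,r_k$ are uniform and mutually independent, while the bitwise XOR $r_1\oplus\dots\oplus r_k$ is identically $0$. *)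

(* Probabilities are rationals (finite discrete distributions). *)
From mathcomp Require Import all_boot all_order all_algebra.
Set Implicit Arguments. Unset Strict Implicit. Unset Printing Implicit Defensive.
Import Order.TTheory GRing.Theory Num.Theory.
Local Open Scope ring_scope.

Definition bitstr (n : nat) := {ffun 'I_n -> bool}.

Definition rand_profile (k m : nat) := {ffun 'I_k -> bitstr m}.

Definition xor_zero (k m : nat) (r : rand_profile k m) : Prop :=
  forall j : 'I_m, \big[addb/false]_(i < k) r i j = false.

(* D is a probability distribution on rand_profile k m realizing XOR-shared
   randomness: every k-1 of the strings are uniform and mutually independent
   (i.e. the joint marginal on any k-1 coordinates is uniform on
   ({0,1}^m)^(k-1)), and the XOR of all k strings is identically 0. *)
Definition xor_shared (k m : nat) (D : {ffun rand_profile k m -> rat}) : Prop :=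
  [/\ (forall r, 0 <= D r),
      \sum_(r : rand_profile k m) D r = 1,
      (forall r, D r != 0 -> xor_zero r) &
      (forall (j : 'I_k) (y : rand_profile k m),
         \sum_(r : rand_profile k m | [forall i, (i != j) ==> (r i == y i)]) D r
           = ((2%:R : rat) ^+ (m * (k - 1)))^-1)].

Definition smp_output (k n m c : nat)
  (enc : 'I_k -> bitstr n -> bitstr m -> bitstr c)
  (ref : {ffun 'I_k -> bitstr c} -> bool)
  (x : {ffun 'I_k -> bitstr n}) (r : rand_profile k m) : bool :=
  ref [ffun i => enc i (x i) (r i)].

Definition prob_out0 (k n m c : nat)
  (enc : 'I_k -> bitstr n -> bitstr m -> bitstr c)
  (ref : {ffun 'I_k -> bitstr c} -> bool)
  (D : {ffun rand_profile k m -> rat}) (x : {ffun 'I_k -> bitstr n}) : rat :=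
  \sum_(r : rand_profile k m | ~~ smp_output enc ref x r) D r.

Definition all_equal (k n : nat) (x : {ffun 'I_k -> bitstr n}) : Prop :=
  forall i j : 'I_k, x i = x j.

From mathcomp Require Import all_boot all_order all_algebra.
Import Order.TTheory GRing.Theory Num.Theory.
Set Implicit Arguments. Unset Strict Implicit. Unset Printing Implicit Defensive.
Local Open Scope ring_scope.

(* Lay the m = c * n shared random bits of player i out as a c x n matrix R_i;
   player i sends the c bits R_i x_i (over GF(2)) and the referee accepts iff
   the XOR of all messages vanishes.  Since the R_i sum to 0, equal inputs are
   always accepted.  The XOR-shared distribution is uniform on the profiles
   with zero sum, and it is invariant under adding the same matrix to two of
   the R_i.  If x_i0 and x_j0 differ at position p, adding a matrix supported
   on column p to R_i0 and R_j0 translates the XOR of the messages by an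
   arbitrary vector; hence that XOR is uniform on {0,1}^c and vanishes with
   probability exactly 2^-c. *)

Section FiberMass.

Variables (R : numFieldType) (T Z : finType) (D : T -> R) (f : T -> Z) (z0 : Z).
Variable h : Z -> T -> T.
Hypothesis h_inj : forall z, injective (h z).
Hypothesis D_h : forall z r, D (h z r) = D r.
Hypothesis f_h : forall z r, (f (h z r) == z) = (f r == z0).

Lemma fiber_mass_uniform (z : Z) :
  \sum_(r | f r == z) D r = (\sum_r D r) / #|Z|%:R.
Proof.
have fiberE y : \sum_(r | f r == y) D r = \sum_(r | f r == z0) D r.
  rewrite (reindex_inj (@h_inj y)).
  by apply: eq_big => r; rewrite ?f_h ?D_h.
have cardZ : #|Z|%:R != 0 :> R by rewrite pnatr_eq0 -lt0n; apply/card_gt0P; exists z0.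
have -> : \sum_r D r = #|Z|%:R * \sum_(r | f r == z0) D r.
  rewrite (partition_big f xpredT) //= (eq_bigr _ (fun y _ => fiberE y)).
  by rewrite sumr_const mulr_natl.
by rewrite fiberE mulrAC divff ?mul1r.
Qed.

End FiberMass.

Definition xor_zerob (k m : nat) (r : rand_profile k m) : bool :=
  [forall j, \big[addb/false]_(i < k) r i j == false].

Lemma xor_zeroP (k m : nat) (r : rand_profile k m) : reflect (xor_zero r) (xor_zerob r).
Proof. by apply: (iffP forallP) => H j; apply/eqP; exact: H. Qed.

Lemma xor_zero_eq (k m : nat) (j : 'I_k) (r r' : rand_profile k m) :
  xor_zero r -> xor_zero r' -> (forall i, i != j -> r' i = r i) -> r' = r.
Proof.
move=> zr zr' eq_r; apply/ffunP => i.
have [->|/eq_r//] := eqVneq i j; apply/ffunP => b.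
have zb := zr b; have zb' := zr' b.
rewrite (bigD1 j) //= in zb; rewrite (bigD1 j) //= in zb'.
rewrite (eq_bigr (fun i => r i b)) in zb'; last by move=> i' /eq_r ->.
by move: zb zb'; case: (r j b); case: (r' j b); case: (\big[addb/false]_(i < k | i != j) r i b).
Qed.

(* A zero-sum profile is determined by all rows but one, so the marginal
   condition for the players other than player 0 is the value of D itself. *)
Lemma xor_sharedE (k m : nat) (D : {ffun rand_profile k m -> rat}) :
  (0 < k)%N -> xor_shared D ->
  forall r, D r = if xor_zerob r then ((2%:R : rat) ^+ (m * (k - 1)))^-1 else 0.
Proof.
move=> k_gt0 [_ _ D_supp D_marg] r; pose j := Ordinal k_gt0.
have [/xor_zeroP zr | nzr] := boolP (xor_zerob r); last first.
  by apply/eqP; apply: contraR nzr => /D_supp /xor_zeroP.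
rewrite -(D_marg j r) (bigD1 r) /=; last by apply/forallP => i; apply/implyP.
rewrite big1 ?addr0 // => r' /andP[/forallP agree ne_r'].
apply/eqP; apply: contraR ne_r' => /D_supp zr'.
apply/eqP/(xor_zero_eq (j := j) zr zr') => i ne_ij.
exact/eqP/(implyP (agree i)).
Qed.

Definition flip2 (k m : nat) (i0 j0 : 'I_k) (d : bitstr m) (r : rand_profile k m) :
  rand_profile k m :=
  [ffun i => [ffun j => r i j (+) ((i == i0) (+) (i == j0)) && d j]].

Lemma flip2K (k m : nat) (i0 j0 : 'I_k) (d : bitstr m) : involutive (flip2 i0 j0 d).
Proof. by move=> r; apply/ffunP => i; apply/ffunP => j; rewrite !ffunE addbK. Qed.

Lemma bigxor_pred1 (I : finType) (i0 : I) (F : I -> bool) :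
  \big[addb/false]_i ((i == i0) && F i) = F i0.
Proof. by rewrite -big_mkcond big_pred1_eq. Qed.

Lemma xor_zerob_flip2 (k m : nat) (i0 j0 : 'I_k) (d : bitstr m) (r : rand_profile k m) :
  xor_zerob (flip2 i0 j0 d r) = xor_zerob r.
Proof.
apply: eq_forallb => j; under eq_bigr do rewrite !ffunE andb_addl.
by rewrite !big_split /= !bigxor_pred1 addbb addbF.
Qed.

Definition cells (c n : nat) := #|{: 'I_c * 'I_n}|.

Definition cell (c n : nat) (a : 'I_c) (b : 'I_n) : 'I_(cells c n) := enum_rank (a, b).

(* Inner products over GF(2) of x with the c rows of the random matrix r. *)
Definition ip_enc (c n : nat) (x : bitstr n) (r : bitstr (cells c n)) : bitstr c :=
  [ffun a => \big[addb/false]_(b < n) (r (cell a b) && x b)].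

Definition xor_referee (k c : nat) (msgs : {ffun 'I_k -> bitstr c}) : bool :=
  [ffun a => \big[addb/false]_i msgs i a] == [ffun => false].

Definition msg_xor (k n c : nat) (x : {ffun 'I_k -> bitstr n})
  (r : rand_profile k (cells c n)) : bitstr c :=
  [ffun a => \big[addb/false]_i ip_enc (x i) (r i) a].

Lemma smp_output_xor (k n c : nat) (x : {ffun 'I_k -> bitstr n}) r :
  smp_output (fun _ => @ip_enc c n) (@xor_referee k c) x r = (msg_xor x r == [ffun => false]).
Proof.
rewrite /smp_output /xor_referee; congr (_ == _); apply/ffunP => a.
by rewrite !ffunE; apply: eq_bigr => i _; rewrite ffunE.
Qed.

Lemma msg_xor_equal (k n c : nat) (x : {ffun 'I_k -> bitstr n}) r (i0 : 'I_k) :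
  all_equal x -> xor_zero r -> msg_xor x r = [ffun => false] :> bitstr c.
Proof.
move=> x_eq zr; apply/ffunP => a; rewrite !ffunE.
under eq_bigr do rewrite ffunE (x_eq _ i0).
by rewrite exchange_big big1 // => b _; rewrite -big_distrl /= zr.
Qed.

Lemma ip_enc_shift (c n : nat) (x : bitstr n) (u v : bitstr (cells c n)) s a :
  ip_enc x [ffun j => u j (+) s && v j] a = ip_enc x u a (+) s && ip_enc x v a.
Proof.
rewrite !ffunE big_distrr -big_split /=.
by apply: eq_bigr => b _; rewrite ffunE andb_addl andbA.
Qed.

Definition column (c n : nat) (p : 'I_n) (w : bitstr c) : bitstr (cells c n) :=
  [ffun j => let: (a, b) := enum_val j in (b == p) && w a].

Lemma ip_enc_column (c n : nat) (x : bitstr n) (p : 'I_n) (w : bitstr c) a :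
  ip_enc x (column p w) a = w a && x p.
Proof.
rewrite ffunE (eq_bigr (fun b => (b == p) && (w a && x b))) ?bigxor_pred1 //.
by move=> b _; rewrite ffunE enum_rankK andbA.
Qed.

Lemma msg_xor_flip2 (k n c : nat) (x : {ffun 'I_k -> bitstr n}) (i0 j0 : 'I_k)
    (p : 'I_n) (w : bitstr c) r :
  x i0 p != x j0 p ->
  msg_xor x (flip2 i0 j0 (column p w) r) = [ffun a => msg_xor x r a (+) w a].
Proof.
move=> x_ne; apply/ffunP => a; rewrite [LHS]ffunE [RHS]ffunE [msg_xor x r a]ffunE.
under eq_bigr do rewrite [flip2 _ _ _ _ _]ffunE ip_enc_shift ip_enc_column andb_addl.
rewrite !big_split /= !bigxor_pred1; congr (_ (+) _).
by move: x_ne; case: (x i0 p); case: (x j0 p); case: (w a).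
Qed.

Lemma ffun_addb_eqr (I : finType) (u w : {ffun I -> bool}) :
  ([ffun a => u a (+) w a] == w) = (u == [ffun => false]).
Proof.
apply/eqP/eqP => [/ffunP eq_w | ->]; apply/ffunP => a; last by rewrite !ffunE.
by move: (eq_w a); rewrite !ffunE; case: (u a); case: (w a).
Qed.

Lemma not_all_equal_diff (k n : nat) (x : {ffun 'I_k -> bitstr n}) :
  ~ all_equal x -> exists i0 j0 p, x i0 p != x j0 p.
Proof.
move=> x_neq; have [|eq_x] := boolP [exists i0, exists j0, exists p, x i0 p != x j0 p].
  by case/existsP=> i0 /existsP[j0 /existsP[p ne]]; exists i0, j0, p.
case: x_neq => i j; apply/ffunP => p; apply/eqP; apply: contraNT eq_x => ne.
by apply/existsP; exists i; apply/existsP; exists j; apply/existsP; exists p.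
Qed.

Theorem claim3 (k n : nat) (hk : (2 <= k)%N) (hn : (1 <= n)%N) (c : nat) :
  exists (m : nat) (enc : 'I_k -> bitstr n -> bitstr m -> bitstr c)
         (ref : {ffun 'I_k -> bitstr c} -> bool),
  forall D : {ffun rand_profile k m -> rat}, xor_shared D ->
  forall x : {ffun 'I_k -> bitstr n},
    (all_equal x -> forall r, D r != 0 -> smp_output enc ref x r = true) /\
    (~ all_equal x -> prob_out0 enc ref D x = 1 - ((2%:R : rat) ^+ c)^-1).
Proof.
have k_gt0 : (0 < k)%N by apply: leq_trans hk.
exists (cells c n), (fun _ => @ip_enc c n), (@xor_referee k c) => D D_xor x.
have [_ D_sum D_supp _] := D_xor; split.
  move=> x_eq r /D_supp zr.
  by rewrite smp_output_xor (msg_xor_equal (Ordinal k_gt0) x_eq zr) eqxx.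
move=> /not_all_equal_diff[i0 [j0 [p x_ne]]].
have P0 : \sum_(r | msg_xor x r == [ffun => false]) D r = ((2%:R : rat) ^+ c)^-1.
  rewrite (fiber_mass_uniform (z0 := [ffun => false]) (h := fun w => flip2 i0 j0 (column p w))).
  - by rewrite D_sum div1r card_ffun card_bool card_ord natrX.
  - by move=> w; apply: inv_inj; apply: flip2K.
  - by move=> w r; rewrite !(xor_sharedE k_gt0 D_xor) xor_zerob_flip2.
  by move=> w r; rewrite msg_xor_flip2 // ffun_addb_eqr.
rewrite /prob_out0 (eq_bigl _ _ (fun r => congr1 negb (smp_output_xor x r))).
rewrite -[X in _ = X - _]D_sum [in RHS](bigID (fun r => msg_xor x r == [ffun => false])) /=.
by rewrite P0 addrAC subrr add0r.
Qed.
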